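(* Let $x,y\in\ell^\infty$ with $|L_x|=n$ and $|L_y|=k$ for some integers $n,k\ge 2$. Then there exist $z_1,z_2\in\operatorname{span}\{x,y\}$ with $$|L_{z_1}|=|\mathcal{E}_{x,y}|\quad\text{and}\quad |L_{z_2}|<|\mathcal{E}_{x,y}|,$$ and moreover $$|\mathcal{E}_{x,y}|=\max\{|L_z|: z\in\operatorname{span}\{x,y\}\}.$$
   Context: $\ell^\infty$ is the Banach space of bounded real sequences $x=(x_n)_{n\ge1}$ with the sup norm. For $x\in\ell^\infty$, $L_x$ denotes the (non-empty compact) set of accumulation points of $x$, i.e. the set of $a\in\mathbb{R}$ such that $x_{n_k}\to a$ for some strictly increasing sequence $(n_k)$. For $S\subset\mathbb{N}$, $1_S$ is the indicator sequence of $S$; $x\sim_{c_0}y$ means $x-y$ converges to $0$. If $|L_x|=n<\infty$, one can write $x\sim_{c_0}\xi_11_{S_1}+\dots+\xi_n1_{S_n}$ where $S_1,\dots,S_n$ is a partition of $\mathbb{N}$ into infinite sets and $\xi_1,\dots,\xi_n$ are the distinct accumulation points; similarly $y\sim_{c_0}\eta_11_{T_1}+\dots+\eta_k1_{T_k}$. Then $\mathcal{E}_{x,y}=\{(i,j)\in\{1,\dots,n\}\times\{1,\dots,k\}: S_i\cap T_j\text{ is infinite}\}$ (this does not depend on the choice of the partitions, which are determined up to finite modifications). *)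

(* real sequences are functions nat -> R (index 0 plays the
   role of index 1 in the paper). *)
From Stdlib Require Import Reals List.
Import ListNotations.
Open Scope R_scope.

Definition in_linf (x : nat -> R) : Prop :=
  exists M : R, forall m : nat, Rabs (x m) <= M.

Definition acc_pt (x : nat -> R) (a : R) : Prop :=
  exists phi : nat -> nat,
    (forall i, (phi i < phi (S i))%nat) /\ Un_cv (fun i => x (phi i)) a.

Definition card_is {A : Type} (P : A -> Prop) (c : nat) : Prop :=
  exists l : list A, NoDup l /\ length l = c /\ (forall a, In a l <-> P a).

Definition infinite_nat (P : nat -> Prop) : Prop :=
  forall N : nat, exists m : nat, (N <= m)%nat /\ P m.

(* A decomposition x ~_{c0} xi_0 1_{S_0} + ... + xi_{n-1} 1_{S_{n-1}}:
   the partition S_0,...,S_{n-1} of nat into infinite sets is encoded by the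
   block-index map blk (m lies in S_{blk m}); the xi_i are the distinct
   accumulation points of x. *)
Definition is_decomp (x : nat -> R) (n : nat) (xi : nat -> R) (blk : nat -> nat)
  : Prop :=
  (forall i j, (i < n)%nat -> (j < n)%nat -> xi i = xi j -> i = j) /\
  (forall i, (i < n)%nat -> acc_pt x (xi i)) /\
  (forall m, (blk m < n)%nat) /\
  (forall i, (i < n)%nat -> infinite_nat (fun m => blk m = i)) /\
  Un_cv (fun m => x m - xi (blk m)) 0.

Definition E_pairs (n k : nat) (S T : nat -> nat) (p : nat * nat) : Prop :=
  (fst p < n)%nat /\ (snd p < k)%nat /\
  infinite_nat (fun m => S m = fst p /\ T m = snd p).

Definition lin2 (a b : R) (x y : nat -> R) : nat -> R :=
  fun m => a * x m + b * y m.

From Stdlib Require Import Reals List Lia Lra Classical ClassicalEpsilon FunctionalExtensionality.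
Open Scope R_scope.

(* Write x ~ sum_i xi_i 1_{S_i} and y ~ sum_j eta_j 1_{T_j} modulo
   null sequences, and let E be the finite list of pairs (i,j) with S_i /\ T_j
   infinite.  The key fact (acc_pt_lin2_iff) is that for all reals a, b the
   accumulation points of a x + b y are exactly the values a xi_i + b eta_j with
   (i,j) in E: along S_i /\ T_j the sequence tends to that value, and since
   eventually every index lies in some infinite S_i /\ T_j, any limit of a
   subsequence is a limit of values from a finite list, hence one of them.
   Consequently |L_{ax+by}| <= |E| always.  Equality is attained for x + t y
   with t avoiding the finitely many "collision slopes" (xi_i - xi_i')/(eta_j' -
   eta_j); strict inequality holds for 0 x + 0 y, which has one accumulation
   point while |E| >= n >= 2, because every xi_i is an accumulation point of x. *)

Lemma Un_cv_const (c : R) : Un_cv (fun _ => c) c.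
Proof.
  intros eps Heps; exists 0%nat; intros m _.
  unfold R_dist; rewrite Rminus_diag, Rabs_R0; lra.
Qed.

Lemma Un_cv_lincomb0 (u v : nat -> R) (a b : R) :
  Un_cv u 0 -> Un_cv v 0 -> Un_cv (fun m => a * u m + b * v m) 0.
Proof.
  intros Hu Hv.
  replace 0 with (a * 0 + b * 0) by ring.
  apply CV_plus; apply CV_mult; auto; apply Un_cv_const.
Qed.

Lemma strict_incr_ge_id (phi : nat -> nat) :
  (forall i, (phi i < phi (S i))%nat) -> forall i, (i <= phi i)%nat.
Proof.
  intros Hphi i; induction i as [|i IH]; [lia|].
  specialize (Hphi i); lia.
Qed.

Lemma Un_cv_subseq (u : nat -> R) (l : R) (phi : nat -> nat) :
  Un_cv u l -> (forall i, (phi i < phi (S i))%nat) -> Un_cv (fun i => u (phi i)) l.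
Proof.
  intros Hu Hphi eps Heps; destruct (Hu eps Heps) as [N HN]; exists N.
  intros i Hi; apply HN; pose proof (strict_incr_ge_id phi Hphi i); lia.
Qed.

Lemma list_separated (l : list R) (v : R) : ~ In v l ->
  exists d, 0 < d /\ forall w, In w l -> d <= Rabs (v - w).
Proof.
  induction l as [|a l IH]; intros Hv.
  - exists 1; split; [lra | intros w []].
  - destruct IH as [d [Hd Hsep]]; [intros Hin; apply Hv; right; exact Hin|].
    assert (Hva : 0 < Rabs (v - a)).
    { apply Rabs_pos_lt; intros Heq; apply Hv; left; lra. }
    exists (Rmin d (Rabs (v - a))); split; [apply Rmin_glb_lt; auto|].
    intros w [<-|Hw]; [apply Rmin_r|].
    eapply Rle_trans; [apply Rmin_l|auto].
Qed.

Lemma limit_in_list (l : list R) (u : nat -> R) (v : R) :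
  Un_cv u v -> (exists N, forall m, (N <= m)%nat -> In (u m) l) -> In v l.
Proof.
  intros Hu [N HN]; apply NNPP; intros Hv.
  destruct (list_separated l v Hv) as [d [Hd Hsep]].
  destruct (Hu d Hd) as [M HM].
  specialize (HM (Nat.max N M) ltac:(lia)).
  specialize (Hsep _ (HN (Nat.max N M) ltac:(lia))).
  unfold R_dist in HM; rewrite Rabs_minus_sym in HM; lra.
Qed.

(* Every finite list of reals misses some real (e.g. 1 + sum of |w|). *)
Lemma list_avoid (l : list R) : exists t, ~ In t l.
Proof.
  set (s := fold_right (fun a acc => Rabs a + acc) 0 l).
  assert (Hbound : forall w, In w l -> w <= s /\ 0 <= s).
  { unfold s; clear s; induction l as [|a l IH]; simpl; [intros w []|].
    assert (Hnn : 0 <= fold_right (fun a acc => Rabs a + acc) 0 l).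
    { clear; induction l; simpl; [lra|pose proof (Rabs_pos a); lra]. }
    intros w [<-|Hw]; [pose proof (Rle_abs a); pose proof (Rabs_pos a); lra|].
    destruct (IH w Hw); pose proof (Rabs_pos a); lra. }
  exists (s + 1); intros Hin; destruct (Hbound _ Hin); lra.
Qed.

Lemma infinite_nat_enum (P : nat -> Prop) : infinite_nat P ->
  exists phi : nat -> nat, (forall i, (phi i < phi (S i))%nat) /\ (forall i, P (phi i)).
Proof.
  intros HP.
  assert (next : forall N, {m | (N <= m)%nat /\ P m}).
  { intros N; apply constructive_indefinite_description; apply HP. }
  set (phi := fix phi i :=
         match i with O => proj1_sig (next O) | S i' => proj1_sig (next (S (phi i'))) end).
  exists phi; split.
  - intros i; simpl; destruct (proj2_sig (next (S (phi i)))); lia.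
  - intros [|i]; simpl;
      [destruct (proj2_sig (next O)) | destruct (proj2_sig (next (S (phi i))))]; auto.
Qed.

Lemma eventually_forall_lt (Q : nat -> nat -> Prop) (n : nat) :
  (forall i, (i < n)%nat -> exists N, forall m, (N <= m)%nat -> Q i m) ->
  exists N, forall i m, (i < n)%nat -> (N <= m)%nat -> Q i m.
Proof.
  induction n as [|n IH]; intros H; [exists 0%nat; intros; lia|].
  destruct IH as [N1 H1]; [intros i Hi; apply H; lia|].
  destruct (H n ltac:(lia)) as [N2 H2].
  exists (Nat.max N1 N2); intros i m Hi Hm.
  destruct (Nat.eq_dec i n) as [->|Hne]; [apply H2 | apply H1]; lia.
Qed.

Lemma eventually_forall_lt2 (Q : nat -> nat -> nat -> Prop) (n k : nat) :
  (forall i j, (i < n)%nat -> (j < k)%nat -> exists N, forall m, (N <= m)%nat -> Q i j m) ->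
  exists N, forall i j m, (i < n)%nat -> (j < k)%nat -> (N <= m)%nat -> Q i j m.
Proof.
  intros H.
  destruct (eventually_forall_lt (fun i m => forall j, (j < k)%nat -> Q i j m) n)
    as [N HN]; [|exists N; intros; apply HN; auto].
  intros i Hi.
  destruct (eventually_forall_lt (Q i) k) as [N HN]; [intros j Hj; apply H; auto|].
  exists N; intros m Hm j Hj; apply HN; auto.
Qed.

Lemma card_is_nodup (P : R -> Prop) (l : list R) :
  (forall v, P v <-> In v l) -> card_is P (length (nodup Req_dec_T l)).
Proof.
  intros HP; exists (nodup Req_dec_T l); split; [apply NoDup_nodup|split; [reflexivity|]].
  intros v; rewrite nodup_In; symmetry; apply HP.
Qed.

Lemma length_nodup_le (l : list R) : (length (nodup Req_dec_T l) <= length l)%nat.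
Proof.
  apply NoDup_incl_length; [apply NoDup_nodup|].
  intros w; rewrite nodup_In; auto.
Qed.

Lemma length_nodup_const (l : list R) (c : R) :
  (forall w, In w l -> w = c) -> (length (nodup Req_dec_T l) <= 1)%nat.
Proof.
  intros Hc; apply (NoDup_incl_length (NoDup_nodup Req_dec_T l) (l' := c :: nil)).
  intros w Hw; apply nodup_In, Hc in Hw; left; auto.
Qed.

Lemma length_ge_2 {A : Type} (l : list A) (p q : A) :
  In p l -> In q l -> p <> q -> (2 <= length l)%nat.
Proof.
  destruct l as [|a [|b l]]; simpl; intros Hp Hq Hpq; [destruct Hp| |lia].
  destruct Hp as [<-|[]]; destruct Hq as [<-|[]]; congruence.
Qed.

Section Decomposition.

Variables (x y : nat -> R) (n k : nat) (xi eta : nat -> R) (S T : nat -> nat).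
Hypothesis Dx : is_decomp x n xi S.
Hypothesis Dy : is_decomp y k eta T.

(* The value that a x + b y approaches along S_i /\ T_j, for p = (i,j). *)
Definition pair_value (a b : R) (p : nat * nat) : R := a * xi (fst p) + b * eta (snd p).

Lemma lin2_minus_pair_value_cv0 (a b : R) :
  Un_cv (fun m => lin2 a b x y m - pair_value a b (S m, T m)) 0.
Proof.
  destruct Dx as (_ & _ & _ & _ & Hx); destruct Dy as (_ & _ & _ & _ & Hy).
  apply (Un_cv_ext (fun m => a * (x m - xi (S m)) + b * (y m - eta (T m)))).
  - intros m; unfold lin2, pair_value; simpl; ring.
  - apply Un_cv_lincomb0; assumption.
Qed.

(* Eventually every index m lies in an infinite block S_i /\ T_j, since only
   finitely many blocks exist and the finite ones are eventually left. *)
Lemma eventually_E_pair :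
  exists N, forall m, (N <= m)%nat -> E_pairs n k S T (S m, T m).
Proof.
  destruct Dx as (_ & _ & HSn & _ & _); destruct Dy as (_ & _ & HTk & _ & _).
  destruct (eventually_forall_lt2
              (fun i j m => S m = i /\ T m = j -> E_pairs n k S T (i, j)) n k)
    as [N HN].
  - intros i j Hi Hj.
    destruct (classic (infinite_nat (fun m => S m = i /\ T m = j))) as [Hinf|Hfin].
    + exists 0%nat; intros m _ _; repeat split; auto.
    + apply not_all_ex_not in Hfin as [N HN]; exists N.
      intros m Hm Hblock; exfalso; apply HN; exists m; auto.
  - exists N; intros m Hm; exact (HN (S m) (T m) m (HSn m) (HTk m) Hm (conj eq_refl eq_refl)).
Qed.

Lemma E_pair_value_acc_pt (a b : R) (p : nat * nat) :
  E_pairs n k S T p -> acc_pt (lin2 a b x y) (pair_value a b p).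
Proof.
  intros (_ & _ & Hinf).
  destruct (infinite_nat_enum _ Hinf) as [phi [Hphi Hblock]].
  exists phi; split; [exact Hphi|].
  pose proof (Un_cv_subseq _ _ phi (lin2_minus_pair_value_cv0 a b) Hphi) as Hdiff.
  apply (Un_cv_ext (fun i => (lin2 a b x y (phi i) - pair_value a b (S (phi i), T (phi i)))
                             + pair_value a b p)).
  - intros i; destruct (Hblock i) as [-> ->]; destruct p; simpl; ring.
  - pose proof (CV_plus _ _ _ _ Hdiff (Un_cv_const (pair_value a b p))) as Hsum.
    rewrite Rplus_0_l in Hsum; exact Hsum.
Qed.

Variable lE : list (nat * nat).
Hypothesis HE : forall p, In p lE <-> E_pairs n k S T p.

Definition pair_values (a b : R) : list R := map (pair_value a b) lE.

(* Every accumulation point of a x + b y is one of the values pair_value a b p,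
   p in E: it is the limit of the step sequence along the subsequence. *)
Lemma acc_pt_in_pair_values (a b v : R) :
  acc_pt (lin2 a b x y) v -> In v (pair_values a b).
Proof.
  intros [phi [Hphi Hcv]].
  apply (limit_in_list _ (fun i => pair_value a b (S (phi i), T (phi i)))).
  - pose proof (Un_cv_subseq _ _ phi (lin2_minus_pair_value_cv0 a b) Hphi) as Hdiff.
    apply (Un_cv_ext (fun i => lin2 a b x y (phi i)
                        - (lin2 a b x y (phi i) - pair_value a b (S (phi i), T (phi i))))).
    + intros i; ring.
    + replace v with (v - 0) by ring; apply CV_minus; assumption.
  - destruct eventually_E_pair as [N HN]; exists N; intros i Hi.
    apply in_map, HE, HN.
    pose proof (strict_incr_ge_id phi Hphi i); lia.
Qed.

Lemma acc_pt_lin2_iff (a b v : R) :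
  acc_pt (lin2 a b x y) v <-> In v (pair_values a b).
Proof.
  split; [apply acc_pt_in_pair_values|].
  intros Hv; apply in_map_iff in Hv as [p [<- Hp]].
  apply E_pair_value_acc_pt, HE, Hp.
Qed.

Lemma card_acc_pt_lin2 (a b : R) :
  card_is (acc_pt (lin2 a b x y)) (length (nodup Req_dec_T (pair_values a b))).
Proof. apply card_is_nodup; intros v; apply acc_pt_lin2_iff. Qed.

(* Every block S_i occurs in E: xi_i is an accumulation point of x = 1 x + 0 y. *)
Lemma E_covers_rows (i : nat) : (i < n)%nat -> exists p, In p lE /\ fst p = i.
Proof.
  intros Hi; destruct Dx as (Hxi_inj & Hxi_acc & _).
  assert (Hacc : acc_pt (lin2 1 0 x y) (xi i)).
  { replace (lin2 1 0 x y) with x; [apply Hxi_acc; exact Hi|].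
    apply functional_extensionality; intros m; unfold lin2; ring. }
  apply acc_pt_in_pair_values, in_map_iff in Hacc as [p [Hval Hp]].
  exists p; split; [exact Hp|].
  apply Hxi_inj; [apply HE in Hp as [Hfst _]; exact Hfst | exact Hi|].
  unfold pair_value in Hval; lra.
Qed.

Lemma two_le_length_E : (2 <= n)%nat -> (2 <= length lE)%nat.
Proof.
  intros Hn.
  destruct (E_covers_rows 0 ltac:(lia)) as [p [Hp Hp0]].
  destruct (E_covers_rows 1 ltac:(lia)) as [q [Hq Hq1]].
  apply (length_ge_2 lE p q Hp Hq); intros ->; congruence.
Qed.

(* For a generic slope t the values xi_i + t eta_j, (i,j) in E, are pairwise
   distinct: t only has to avoid the finitely many collision slopes. *)
Lemma generic_pair_values_NoDup :
  NoDup lE -> exists t, NoDup (pair_values 1 t).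
Proof.
  intros HlE.
  set (slopes := flat_map (fun p => map (fun q => (xi (fst p) - xi (fst q)) /
                                                  (eta (snd q) - eta (snd p))) lE) lE).
  destruct (list_avoid slopes) as [t Ht]; exists t.
  apply NoDup_map_NoDup_ForallPairs; [|exact HlE].
  intros [i j] [i' j'] Hp Hq Heq; unfold pair_value in Heq; simpl in Heq.
  pose proof (proj1 (HE _) Hp) as [Hi [Hj _]]; pose proof (proj1 (HE _) Hq) as [Hi' [Hj' _]].
  simpl in *; destruct Dx as [Hxi_inj _]; destruct Dy as [Heta_inj _].
  destruct (Req_dec_T (eta j) (eta j')) as [Heta|Heta].
  - assert (j = j') as <- by (apply Heta_inj; auto).
    f_equal; apply Hxi_inj; auto; lra.
  - exfalso; apply Ht, in_flat_map; exists (i, j); split; [exact Hp|].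
    apply in_map_iff; exists (i', j'); split; [|exact Hq]; simpl.
    field_simplify_eq; [lra|intros Hz; apply Heta; lra].
Qed.

End Decomposition.

Theorem lemma2p1 (x y : nat -> R) (n k : nat) :
  in_linf x -> in_linf y ->
  card_is (acc_pt x) n -> card_is (acc_pt y) k ->
  (2 <= n)%nat -> (2 <= k)%nat ->
  forall (xi : nat -> R) (S : nat -> nat) (eta : nat -> R) (T : nat -> nat)
         (e : nat),
    is_decomp x n xi S -> is_decomp y k eta T ->
    card_is (E_pairs n k S T) e ->
    (exists a1 b1 : R, card_is (acc_pt (lin2 a1 b1 x y)) e) /\
    (exists (a2 b2 : R) (c2 : nat),
        card_is (acc_pt (lin2 a2 b2 x y)) c2 /\ (c2 < e)%nat) /\
    (forall a b : R, exists c : nat,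
        card_is (acc_pt (lin2 a b x y)) c /\ (c <= e)%nat).
Proof.
  intros _ _ _ _ Hn _ xi S eta T e Dx Dy [lE [HlE [<- HE]]].
  pose proof (card_acc_pt_lin2 x y n k xi eta S T Dx Dy lE HE) as Hcard.
  split; [|split].
  - (* a generic slope separates all values *)
    destruct (generic_pair_values_NoDup x y n k xi eta S T Dx Dy lE HE HlE) as [t Ht].
    exists 1, t; specialize (Hcard 1 t).
    rewrite (nodup_fixed_point _ Ht) in Hcard; unfold pair_values in Hcard.
    rewrite length_map in Hcard; exact Hcard.
  - (* the zero combination has a single accumulation point *)
    exists 0, 0; eexists; split; [apply Hcard|].
    assert (Hone : (length (nodup Req_dec_T (pair_values xi eta lE 0 0)) <= 1)%nat).
    { apply (length_nodup_const _ 0); intros w Hw.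
      apply in_map_iff in Hw as [p [<- _]]; unfold pair_value; ring. }
    pose proof (two_le_length_E x y n k xi eta S T Dx Dy lE HE Hn); lia.
  - intros a b; eexists; split; [apply Hcard|].
    pose proof (length_nodup_le (pair_values xi eta lE a b)) as Hle.
    unfold pair_values in Hle at 2; rewrite length_map in Hle; exact Hle.
Qed.
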